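(* Let $\mathbf{X}$ be a finite tournament isomorphic to an induced subtournament of $\mathbf{S}(2)$. Then there exists a finite tournament $\mathbf{Y}$ isomorphic to an induced subtournament of $\mathbf{S}(2)$ such that every extension of $\mathbf{X}$ in $\mathcal{P}_2$ embeds into every extension of $\mathbf{Y}$ in $\mathcal{P}_2$.
   Context: $\mathbf{S}(2)$ is the tournament whose vertices are the points of the unit circle of $\mathbb{C}$ with rational argument, with an arc from $x$ to $y$ iff $0<\arg(y/x)<\pi$. $\mathcal{P}_2$ is the class of finite structures $\mathbf{A}=(A,<^{\mathbf{A}},P_1^{\mathbf{A}},P_2^{\mathbf{A}})$ with $<^{\mathbf{A}}$ a linear order and $(P_1^{\mathbf{A}},P_2^{\mathbf{A}})$ a partition of $A$; an embedding is an isomorphism onto a substructure (order-preserving injection preserving $P_1$ and $P_2$). Writing $a\sim b$ when $a,b$ lie in the same part, $p(\mathbf{A})$ is the tournament on $A$ with an arc from $a$ to $b$ iff either ($a\sim b$ and $a<^{\mathbf{A}}b$) or ($a\not\sim b$ and $b<^{\mathbf{A}}a$). An extension of a tournament $\mathbf{X}$ is any $\mathbf{A}\in\mathcal{P}_2$ with $p(\mathbf{A})=\mathbf{X}$. *)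

From HB Require Import structures.
From mathcomp Require Import all_boot all_order all_algebra.
From Stdlib Require Import Reals.
From mathcomp Require Import Rstruct.
Set Implicit Arguments. Unset Strict Implicit. Unset Printing Implicit Defensive.
Import Order.TTheory GRing.Theory Num.Theory.
Local Open Scope ring_scope.

Definition is_tournament (T : finType) (E : rel T) : Prop :=
  (forall x, ~~ E x x) /\
  (forall x y, x != y -> (E x y || E y x) && ~~ (E x y && E y x)).

(** A vertex is a point e^{i q} of the unit circle with
    rational argument q (in radians); we index it by q : rat (distinct
    rationals give distinct points since pi is irrational).  For
    x = e^{i q}, y = e^{i q'}, the arguments of y/x are the reals
    q' - q + 2 k pi (k integer); there is an arc x -> y iff one of them lies
    in the open interval (0, pi), i.e. iff 0 < arg(y/x) < pi. *)
Definition S2_arc (q q' : rat) : Prop :=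
  exists k : int,
    (0 < (ratr q' : Rdefinitions.R) - ratr q + k%:~R * 2 * PI)%R /\
    ((ratr q' : Rdefinitions.R) - ratr q + k%:~R * 2 * PI < PI)%R.

Definition S2_embeddable (T : finType) (E : rel T) : Prop :=
  exists f : T -> rat, injective f /\
    (forall x y, E x y <-> S2_arc (f x) (f y)).

(** A structure of P_2 on the finite set T: a strict linear order lt and a
    partition (P_1, P_2) of T, encoded by c : T -> bool with
    P_1 = [pred x | c x] and P_2 = [pred x | ~~ c x]. *)
Definition is_strict_linear_order (T : finType) (lt : rel T) : Prop :=
  (forall x, ~~ lt x x) /\
  (forall x y z, lt x y -> lt y z -> lt x z) /\
  (forall x y, x != y -> lt x y || lt y x).

Definition p_arc (T : finType) (lt : rel T) (c : T -> bool) : rel T :=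
  fun a b => ((c a == c b) && lt a b) || ((c a != c b) && lt b a).

Definition is_extension (T : finType) (E : rel T) (ltA : rel T)
    (cA : T -> bool) : Prop :=
  is_strict_linear_order ltA /\ (forall a b, p_arc ltA cA a b = E a b).

Definition P2_embedding (T U : finType) (ltA : rel T) (cA : T -> bool)
    (ltB : rel U) (cB : U -> bool) (f : T -> U) : Prop :=
  injective f /\ (forall x y, ltB (f x) (f y) = ltA x y) /\
  (forall x, cB (f x) = cA x).

From HB Require Import structures.
From mathcomp Require Import all_boot all_order all_algebra.
From Stdlib Require Import Reals.
From mathcomp Require Import Rstruct reals lra zify ring.
Set Implicit Arguments. Unset Strict Implicit. Unset Printing Implicit Defensive.

(* An extension of a tournament is determined by its least element and the
   colour of that element, and moving an element m to the front of the order
   while flipping the colours of the elements below m yields another extension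
   of the same tournament.  Hence every extension of X is such a rotation of a
   single extension (lt0, c0), which exists because X lies on the circle
   (colour = upper or lower half, order = angle modulo a half-turn).  Y is the
   lexicographic sum of all rotations of (lt0, c0), each with both colourings,
   repeated in two halves.  Any extension of Y is a rotation of this one at its
   least element w; it leaves intact, up to a global colour flip, every copy in
   the half not containing w, and one of those copies is the required extension
   of X.  Finally Y embeds in S(2), like every tournament of the form p(A). *)

Section StrictLinearOrder.
Variables (T : finType) (lt : rel T).
Hypothesis lt_slo : is_strict_linear_order lt.

Lemma slo_irr x : lt x x = false.
Proof. by have [irr _] := lt_slo; exact: negbTE. Qed.

Lemma slo_trans x y z : lt x y -> lt y z -> lt x z.
Proof. by have [_ [tr _]] := lt_slo; exact: tr. Qed.

Lemma slo_total x y : x != y -> lt x y || lt y x.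
Proof. by have [_ [_ tot]] := lt_slo; exact: tot. Qed.

Lemma slo_asym x y : lt x y -> lt y x = false.
Proof. by move=> lxy; apply/negbTE/negP => /(slo_trans lxy); rewrite slo_irr. Qed.

Lemma slo_neq_lt x y : x != y -> lt x y = ~~ lt y x.
Proof. by move=> nxy; case/orP: (slo_total nxy) => h; rewrite h ?(slo_asym h). Qed.

Lemma p_arc_tournament (c : T -> bool) : is_tournament (p_arc lt c).
Proof.
split=> [x|x y nxy]; first by rewrite /p_arc slo_irr !andbF.
rewrite /p_arc (slo_neq_lt nxy).
by case: (c x); case: (c y); case: (lt y x).
Qed.

Lemma p_arc_extension (c : T -> bool) : is_extension (p_arc lt c) lt c.
Proof. by []. Qed.

Definition rank x := #|[pred y | lt y x]|.

Lemma rank_lt x y : lt x y -> rank x < rank y.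
Proof.
move=> lxy; apply: proper_card; apply/properP; split.
  by apply/subsetP => z; rewrite !inE => /slo_trans; apply.
by exists x; rewrite !inE // slo_irr.
Qed.

Lemma rank_ltE x y : lt x y = (rank x < rank y).
Proof.
apply/idP/idP; first exact: rank_lt.
have [->|nxy] := eqVneq x y; first by rewrite ltnn.
by rewrite (slo_neq_lt nxy); apply: contraL => /rank_lt ryx; rewrite -leqNgt ltnW.
Qed.

Lemma rank_lt_card x : rank x < #|T|.
Proof.
rewrite /rank [#|T|](cardD1 x) inE add1n ltnS; apply: subset_leq_card.
apply/subsetP => z; rewrite !inE => lzx; rewrite andbT.
by apply: contraTneq lzx => ->; rewrite slo_irr.
Qed.

Definition least m := forall x, x != m -> lt m x.

Lemma exists_least (x0 : T) : exists m, least m.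
Proof.
have [m _ min_m] := arg_minnP rank (erefl (x0 \in predT)).
exists m => x; rewrite eq_sym => nmx.
by rewrite (slo_neq_lt nmx) rank_ltE -leqNgt; exact: min_m.
Qed.

End StrictLinearOrder.

Section Extensions.
Variables (T : finType) (E : rel T).

Lemma extension_ltE lt c x y : is_extension E lt c -> x != y ->
  lt x y = (E x y == (c x == c y)).
Proof.
move=> [lt_slo pE] nxy; rewrite -pE /p_arc.
rewrite eq_sym in nxy; rewrite (slo_neq_lt lt_slo nxy).
by case: (c x); case: (c y); case: (lt x y).
Qed.

Lemma extension_colE lt c m x : is_extension E lt c -> least lt m -> x != m ->
  c x = (c m == E m x).
Proof.
move=> [lt_slo pE] lm nxm; rewrite -pE /p_arc lm // (slo_asym lt_slo (lm x nxm)).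
by case: (c x); case: (c m).
Qed.

Lemma extension_eq lt1 c1 lt2 c2 m :
  is_extension E lt1 c1 -> is_extension E lt2 c2 ->
  least lt1 m -> least lt2 m -> c1 m = c2 m -> c1 =1 c2 /\ lt1 =2 lt2.
Proof.
move=> ext1 ext2 lm1 lm2 cm.
have ec : c1 =1 c2.
  move=> x; have [->//|nxm] := eqVneq x m.
  by rewrite (extension_colE ext1 lm1 nxm) (extension_colE ext2 lm2 nxm) cm.
split=> // x y; have [->|nxy] := eqVneq x y.
  by rewrite (slo_irr ext1.1) (slo_irr ext2.1).
by rewrite (extension_ltE ext1 nxy) (extension_ltE ext2 nxy) !ec.
Qed.

End Extensions.

Section Rotation.
Variables (T : finType) (lt : rel T) (m : T).
Hypothesis lt_slo : is_strict_linear_order lt.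

Definition rotate : rel T :=
  fun a b => if lt a m == lt b m then lt a b else lt b m.

Definition rotate_col (c : T -> bool) (s : bool) : T -> bool :=
  fun a => c a (+) lt a m (+) s.

Lemma rotate_slo : is_strict_linear_order rotate.
Proof.
split; first by move=> x; rewrite /rotate eqxx slo_irr.
split=> [x y z|x y nxy]; rewrite /rotate.
  case hx: (lt x m); case hy: (lt y m); case hz: (lt z m) => //=;
  exact: slo_trans.
by case: (lt x m); case: (lt y m) => //=; exact: slo_total.
Qed.

Lemma rotate_least : least rotate m.
Proof.
move=> x nxm; rewrite /rotate slo_irr //; case lxm: (lt x m) => //=.
by rewrite eq_sym in nxm; rewrite (slo_neq_lt lt_slo nxm) lxm.
Qed.

Lemma lt_across a b : lt a m -> ~~ lt b m -> lt a b.
Proof.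
move=> lam nbm; have [<-//|nmb] := eqVneq m b.
by apply: (slo_trans lt_slo lam); rewrite (slo_neq_lt lt_slo nmb) nbm.
Qed.

Lemma p_arc_rotate c s : p_arc rotate (rotate_col c s) =2 p_arc lt c.
Proof.
move=> a b; rewrite /p_arc /rotate /rotate_col.
case ha: (lt a m); case hb: (lt b m) => /=.
- by case: (c a); case: (c b); case: s.
- have lab := lt_across ha (negbT hb).
  by rewrite lab (slo_asym lt_slo lab); case: (c a); case: (c b); case: s.
- have lba := lt_across hb (negbT ha).
  by rewrite lba (slo_asym lt_slo lba); case: (c a); case: (c b); case: s.
- by case: (c a); case: (c b); case: s.
Qed.

End Rotation.

Lemma rotate_extension (T : finType) (E lt : rel T) c m s :
  is_extension E lt c -> is_extension E (rotate lt m) (rotate_col lt m c s).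
Proof.
move=> [lt_slo pE]; split; first exact: rotate_slo.
by move=> a b; rewrite p_arc_rotate.
Qed.

Lemma extension_rotateE (T : finType) (E : rel T) lt1 c1 lt2 c2 m :
  is_extension E lt1 c1 -> is_extension E lt2 c2 -> least lt2 m ->
  c2 =1 rotate_col lt1 m c1 (c1 m (+) c2 m) /\ lt2 =2 rotate lt1 m.
Proof.
move=> ext1 ext2 lm2.
have [|ec el] := extension_eq (rotate_extension m (c1 m (+) c2 m) ext1) ext2
  (rotate_least (m := m) ext1.1) lm2.
  by rewrite /rotate_col (slo_irr ext1.1) addbF addbA addbb.
by split=> [x|x y]; rewrite ?ec ?el.
Qed.

Section LexicographicSum.
Variables (I A : finType) (ltI : rel I) (ltA : I -> rel A).

Definition lexsum : rel (A * I) :=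
  fun a b => ltI a.2 b.2 || (a.2 == b.2) && ltA a.2 a.1 b.1.

Lemma lexsum_neq a b : a.2 != b.2 -> lexsum a b = ltI a.2 b.2.
Proof. by rewrite /lexsum => /negbTE ->; rewrite orbF. Qed.

Lemma lexsum_same x y i : ~~ ltI i i -> lexsum (x, i) (y, i) = ltA i x y.
Proof. by rewrite /lexsum /= eqxx => /negbTE ->. Qed.

Lemma lexsum_slo : is_strict_linear_order ltI ->
  (forall i, is_strict_linear_order (ltA i)) -> is_strict_linear_order lexsum.
Proof.
move=> ltI_slo ltA_slo; split=> [[x i]|].
  by rewrite /lexsum /= (slo_irr ltI_slo) (slo_irr (ltA_slo i)) andbF.
split=> [[x i] [y j] [z k]|[x i] [y j]]; rewrite /lexsum /=.
  case/orP=> [lij|/andP [/eqP <- lxy]]; case/orP=> [ljk|/andP [/eqP <- lyz]].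
  - by rewrite (slo_trans ltI_slo lij ljk).
  - by rewrite lij.
  - by rewrite ljk.
  - by rewrite eqxx (slo_trans (ltA_slo i) lxy lyz) orbT.
have [<- nxy|nij _] := eqVneq i j.
  have nxy' : x != y by apply: contra nxy => /eqP ->.
  by rewrite (slo_irr ltI_slo) /=; exact: slo_total.
by case/orP: (slo_total ltI_slo nij) => ->; rewrite ?orbT.
Qed.

End LexicographicSum.

Definition bool_lt : rel bool := fun a b => ~~ a && b.

Lemma bool_lt_slo : is_strict_linear_order bool_lt.
Proof. by split=> [[]|]; split=> [[] [] []|[] []]. Qed.

Section Rotations.
Variables (T : finType) (lt0 : rel T) (c0 : T -> bool).

(* The vertex (x, (v, (p, h))) is x in the copy of (lt0, c0) rotated at v
   with colours flipped by p; the copies are ordered by the half h first. *)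
Definition copies_lt : rel (T * (bool * bool)) :=
  lexsum (lexsum bool_lt (fun=> bool_lt)) (fun=> lt0).

Definition rotations_lt : rel (T * (T * (bool * bool))) :=
  lexsum copies_lt (fun b => rotate lt0 b.1).

Definition rotations_col (a : T * (T * (bool * bool))) : bool :=
  rotate_col lt0 a.2.1 c0 a.2.2.1 a.1.

Hypothesis lt0_slo : is_strict_linear_order lt0.

Lemma copies_slo : is_strict_linear_order copies_lt.
Proof.
apply: lexsum_slo => [|_] //.
by apply: lexsum_slo => [|_]; exact: bool_lt_slo.
Qed.

Lemma rotations_slo : is_strict_linear_order rotations_lt.
Proof. by apply: lexsum_slo copies_slo _ => b; exact: rotate_slo. Qed.

Lemma rotations_lt_half a b : a.2.2.2 != b.2.2.2 ->
  rotations_lt a b = bool_lt a.2.2.2 b.2.2.2.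
Proof.
move=> nh; rewrite /rotations_lt /copies_lt lexsum_neq; last first.
  by apply: contra nh => /eqP ->.
by rewrite lexsum_neq ?lexsum_neq //; apply: contra nh => /eqP ->.
Qed.

Lemma rotations_universal E ltA cA ltB cB :
  is_extension E lt0 c0 -> is_extension E ltA cA ->
  is_extension (p_arc rotations_lt rotations_col) ltB cB ->
  exists f : T -> T * (T * (bool * bool)), P2_embedding ltA cA ltB cB f.
Proof.
move=> ext0 extA extB.
have [x0 _|T0] := pickP T; last first.
  exists (fun x => (x, (x, (false, false)))).
  by split=> [x|]; [|split=> [x y|x]]; have := T0 x.
have [v lv] := exists_least extA.1 x0.
have [[xw [vw [pw h]]] lw] := exists_least extB.1 (x0, (x0, (false, false))).
have [eA lA] := extension_rotateE ext0 extA lv.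
have [eB lB] := extension_rotateE (p_arc_extension rotations_slo _) extB lw.
set w := (xw, _) in lB eB.
have side x p : rotations_lt (x, (v, (p, ~~ h))) w = h.
  by rewrite rotations_lt_half /=; case: (h).
set sA := c0 v (+) cA v; set sB := _ (+) cB w in eB.
(* The half ~~ h lies on one side of w, so rotating at w keeps its order and
   flips its colours by h; the parity of the copy undoes the flips h, sA, sB. *)
pose g (x : T) := (x, (v, (sA (+) sB (+) h, ~~ h))).
exists g; split; first by move=> x y [].
split=> [x y|x].
  by rewrite lB lA /rotate !side eqxx /rotations_lt lexsum_same // (slo_irr copies_slo).
rewrite eB eA /rotate_col side /rotations_col /= /rotate_col -/sA.
by move: (c0 x (+) lt0 x v) (sA) (sB) (h); do !case.
Qed.

End Rotations.

Section Geometry.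
Import Order.TTheory GRing.Theory Num.Theory.
Local Open Scope ring_scope.

Lemma PI_gt0 : 0 < PI.
Proof. by apply/RltP; exact: PI_RGT_0. Qed.

Definition upper_angle (d : R) : Prop :=
  exists k : int, 0 < d + k%:~R * 2 * PI /\ d + k%:~R * 2 * PI < PI.
(* Otherwise the argument would be read in Stdlib's R_scope. *)
Arguments upper_angle d%_ring_scope.

Lemma S2_arcE q q' : S2_arc q q' <-> upper_angle (ratr q' - ratr q).
Proof.
have two : IZR 2 = 2 by [].
split=> [[k [h1 h2]]|[k [h1 h2]]]; exists k.
  by move/RltP: h1; move/RltP: h2; rewrite ?RplusE ?RminusE ?RmultE two R0E.
by split; apply/RltP; rewrite ?RplusE ?RminusE ?RmultE two ?R0E.
Qed.

Lemma upper_angle_shift d (j : int) :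
  upper_angle (d + j%:~R * 2 * PI) <-> upper_angle d.
Proof.
split=> [[k [k1 k2]]|[k [k1 k2]]].
  exists (k + j); move: k1 k2; rewrite intrD !mulrDl.
  by move: (k%:~R * 2 * PI) (j%:~R * 2 * PI) => a b k1 k2; split; lra.
exists (k - j); move: k1 k2; rewrite intrB !mulrBl.
by move: (k%:~R * 2 * PI) (j%:~R * 2 * PI) => a b k1 k2; split; lra.
Qed.

Lemma upper_angleE d : - (2 * PI) < d < 2 * PI ->
  upper_angle d <-> (0 < d < PI \/ d < - PI).
Proof.
move=> /andP [d1 d2]; have pi0 := PI_gt0; split.
  move=> [k [k1 k2]].
  have [k_le|[k0|[k1'|k_ge]]] : k <= -1 \/ k = 0 \/ k = 1 \/ 2 <= k by lia.
  - have kR : k%:~R <= -1 :> R by rewrite -(ler_int R) in k_le.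
    have : k%:~R * 2 * PI <= -1 * 2 * PI by rewrite -!mulrA ler_pM2r; lra.
    lra.
  - by move: k1 k2; rewrite k0 mulr0z !mul0r addr0 => k1 k2; left; apply/andP.
  - by move: k1 k2; rewrite k1' mulr1z !mul1r; lra.
  - have kR : 2 <= k%:~R :> R by rewrite -(ler_int R) in k_ge.
    have : 2 * 2 * PI <= k%:~R * 2 * PI by rewrite -!mulrA ler_pM2r; lra.
    lra.
move=> [/andP [k1 k2]|k1].
  by exists 0; rewrite mulr0z !mul0r addr0.
by exists 1; rewrite mulr1z !mul1r; split; lra.
Qed.

Lemma upper_angle0 : ~ upper_angle 0.
Proof.
have pi0 := PI_gt0.
by rewrite upper_angleE; [case=> [/andP []|]; lra | apply/andP; split; lra].
Qed.

(* Angles in the upper half-circle carry the colour true, those in the lower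
   half-circle the colour false; u is the angle modulo a half-turn. *)
Lemma upper_angle_half_turn (u u' : R) (b b' : bool) :
  0 <= u < PI -> 0 <= u' < PI -> u != u' ->
  upper_angle ((u' + (~~ b')%:R * PI) - (u + (~~ b)%:R * PI)) <->
  (if b == b' then u < u' else u' < u).
Proof.
move=> /andP [u1 u2] /andP [u'1 u'2] nuu'; have pi0 := PI_gt0.
have [lt_uu'|lt_u'u] : u < u' \/ u' < u.
  by case: (ltgtP u u') nuu' => //; [left | right].
all: case: b; case: b'; rewrite /= ?mulr0n ?mulr1n ?mul0r ?mul1r ?addr0.
all: rewrite upper_angleE; [split=> [[/andP []|]|]; lra | apply/andP; split; lra].
Qed.

Lemma p_arc_upper_angle (T : finType) (lt : rel T) (c : T -> bool) (u : T -> R) :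
  is_strict_linear_order lt -> {homo u : x y / lt x y >-> x < y} ->
  (forall x, 0 <= u x < PI) ->
  forall x y, p_arc lt c x y <->
    upper_angle ((u y + (~~ c y)%:R * PI) - (u x + (~~ c x)%:R * PI)).
Proof.
move=> lt_slo u_mono u_bound x y.
have [<-|nxy] := eqVneq x y.
  by rewrite subrr /p_arc (slo_irr lt_slo) !andbF; split=> // /upper_angle0.
have u_lt a b : a != b -> lt a b = (u a < u b).
  move=> nab; apply/idP/idP => [/u_mono //|ltu]; rewrite (slo_neq_lt lt_slo nab).
  by apply/negP => /u_mono; rewrite ltNge (ltW ltu).
have nu : u x != u y.
  case/orP: (slo_total lt_slo nxy) => /u_mono; rewrite lt_def => /andP [] //.
  by rewrite eq_sym.
have nyx : y != x by rewrite eq_sym.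
rewrite upper_angle_half_turn // /p_arc !u_lt //.
by case: (c x == c y); rewrite /= ?orbF.
Qed.

Lemma tournament_S2_embeddable (T : finType) (E : rel T) (f : T -> rat) :
  is_tournament E -> (forall x y, E x y <-> S2_arc (f x) (f y)) ->
  S2_embeddable E.
Proof.
move=> [_ tot] Ef; exists f; split=> // x y fxy.
have [//|nxy] := eqVneq x y.
by case/andP: (tot _ _ nxy) => /orP [] /Ef; rewrite S2_arcE fxy subrr => /upper_angle0.
Qed.

Lemma p_arc_S2_embeddable (T : finType) (lt : rel T) (c : T -> bool) :
  is_strict_linear_order lt -> S2_embeddable (p_arc lt c).
Proof.
move=> lt_slo; have pi0 := PI_gt0.
pose d : R := PI / #|T|.+1%:R.
have d0 : 0 < d by rewrite divr_gt0 // ltr0n.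
have PIE : PI = #|T|.+1%:R * d by rewrite /d mulrC divfK // pnatr_eq0.
pose lo x := (rank lt x)%:R * d + (~~ c x)%:R * PI.
have /fin_all_exists [f f_in] : forall x, exists q : rat, ratr q \in `]lo x, lo x + d[.
  by move=> x; apply: rat_in_itvoo; rewrite ltrDl.
pose u x := ratr (f x) - (~~ c x)%:R * PI.
have u_in x : (rank lt x)%:R * d < u x < (rank lt x).+1%:R * d.
  move: (f_in x); rewrite in_itv /= -natr1 mulrDl mul1r /u /lo => /andP [? ?].
  by apply/andP; split; lra.
have u_mono : {homo u : x y / lt x y >-> x < y}.
  move=> x y /(rank_lt lt_slo) r_lt.
  have : (rank lt x).+1%:R * d <= (rank lt y)%:R * d by rewrite ler_pM2r // ler_nat.
  by move: (u_in x) (u_in y) => /andP [? ?] /andP [? ?]; lra.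
have u_bound x : 0 <= u x < PI.
  have : (rank lt x).+1%:R * d <= #|T|%:R * d by rewrite ler_pM2r // ler_nat rank_lt_card.
  have : #|T|%:R * d < PI by rewrite PIE ltr_pM2r // ltr_nat.
  have : 0 <= (rank lt x)%:R * d by rewrite mulr_ge0 // ltW.
  by move: (u_in x) => /andP [? ?] ? ? ?; apply/andP; split; lra.
apply: (tournament_S2_embeddable (f := f)); first exact: p_arc_tournament.
move=> x y; rewrite S2_arcE (p_arc_upper_angle c lt_slo u_mono u_bound).
by rewrite /u !subrK.
Qed.

Lemma S2_extension (T : finType) (E : rel T) :
  is_tournament E -> S2_embeddable E -> exists lt c, is_extension E lt c.
Proof.
move=> [_ tot] [f [_ Ef]]; have pi0 := PI_gt0.
have tpi0 : 0 < 2 * PI by lra.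
pose k x := Num.floor (ratr (f x) / (2 * PI)).
pose t x := ratr (f x) - (k x)%:~R * (2 * PI).
have t_bound x : 0 <= t x < 2 * PI.
  have /andP [] := floor_itv (ratr (f x) / (2 * PI)).
  rewrite -/(k x) (ler_pdivlMr _ _ tpi0) (ltr_pdivrMr _ _ tpi0) intrD mulrDl mul1r.
  by rewrite /t => ? ?; apply/andP; split; lra.
have E_t x y : E x y <-> upper_angle (t y - t x).
  rewrite Ef S2_arcE -(upper_angle_shift _ (k x - k y)).
  suff -> : ratr (f y) - ratr (f x) + (k x - k y)%:~R * 2 * PI = t y - t x by [].
  by rewrite /t intrB; ring.
pose c x := t x < PI.
pose u x := t x - (~~ c x)%:R * PI.
have tE x : t x = u x + (~~ c x)%:R * PI by rewrite subrK.
have u_bound x : 0 <= u x < PI.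
  rewrite /u /c; move: (t_bound x) => /andP [? ?]; case: (ltP (t x) PI) => /= ?;
  by rewrite ?mulr0n ?mulr1n ?mul0r ?mul1r; apply/andP; split; lra.
have u_inj x y : x != y -> u x != u y.
  move=> nxy; apply/eqP => uxy; have /andP [? ?] := u_bound y.
  case/andP: (tot _ _ nxy) => /orP [] /E_t; rewrite (tE x) (tE y) uxy;
  case: (c x); case: (c y);
  rewrite /= ?mulr0n ?mulr1n ?mul0r ?mul1r ?addr0 upper_angleE;
  by [case=> [/andP []|]; lra | apply/andP; split; lra].
pose lt x y := u x < u y.
have lt_slo : is_strict_linear_order lt.
  split; first by move=> x; rewrite /lt ltxx.
  split; first by move=> x y z; exact: lt_trans.
  by move=> x y /u_inj; exact: lt_total.
exists lt, c; split=> // x y.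
have arcE : p_arc lt c x y <-> E x y.
  by rewrite E_t (tE x) (tE y); exact: p_arc_upper_angle.
by apply/idP/idP => /arcE.
Qed.

End Geometry.

Theorem lemma3 (T : finType) (E : rel T) :
  is_tournament E -> S2_embeddable E ->
  exists (U : finType) (F : rel U),
    is_tournament F /\ S2_embeddable F /\
    forall (ltA : rel T) (cA : T -> bool), is_extension E ltA cA ->
    forall (ltB : rel U) (cB : U -> bool), is_extension F ltB cB ->
    exists f : T -> U, P2_embedding ltA cA ltB cB f.
Proof.
move=> E_tour E_S2; have [lt0 [c0 ext0]] := S2_extension E_tour E_S2.
have rot_slo := rotations_slo ext0.1.
exists _, (p_arc (rotations_lt lt0) (rotations_col lt0 c0)).
split; first exact: p_arc_tournament.
split; first exact: p_arc_S2_embeddable.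
by move=> ltA cA extA ltB cB extB; exact: (rotations_universal ext0.1 ext0 extA extB).
Qed.
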